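(* Let $N$ be an even positive integer and set Planck's constant $h=2\pi\hbar=1/N$. Let $F=(E_x+X^{-1/2}O_x)(B+Y^{-1}T)S$ be the operator described in the context. Then for every $m\in\mathbb{Z}$, $XF\Phi_m=F\Phi_m$ and $YF\Phi_m=F\Phi_m$; that is, $F$ maps the space $\mathcal{H}_\hbar(0)$ of (generalized) joint eigenvectors of $X$ and $Y$ with eigenvalue $1$ into itself.
   Context: $\widehat x$ is multiplication by $x$, $\widehat p=(\hbar/i)d/dx$. For real $s$, $X^{s}=e^{is\widehat{x}/\hbar}$, $Y^{s}=e^{is\widehat{p}/\hbar}$ (for $h=1/N$, $X=U^N$, $Y=V^N$ with $U=e^{2\pi i\widehat x}$, $V=e^{2\pi i\widehat p}$). $S=\exp\!\big(-\tfrac{i\log 2}{2\hbar}(\widehat{x}\widehat{p}+\widehat{p}\widehat{x})\big)$. $E_x$, $O_x$ are multiplication by the indicators of $[0,1)+2\mathbb{Z}$, $[1,2)+2\mathbb{Z}$; $B$, $T$ are the spectral projections of $\widehat p$ onto $[0,1/2)+\mathbb{Z}$, $[1/2,1)+\mathbb{Z}$. $\Phi_m=\Phi_m^{(0,0)}=N^{-1/2}\sum_{k\in\mathbb{Z}}\delta\big(x-\tfrac{m}{N}-k\big)$ (periodic $\delta$-comb). *)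

From Stdlib Require Import Reals List ZArith.
From Stdlib Require Import Classical ClassicalEpsilon.
From Coquelicot Require Import Complex.
Open Scope R_scope.

(* All generalized vectors occurring here are discrete
   (Dirac-type) measures sum_a w(a) delta(x - a) on R; such a measure is
   represented by its weight function w : R -> C (w(a) = mass at a). *)
Definition gvec := R -> C.

Definition Cexpi (t : R) : C := (cos t, sin t).

Definition hbar (N : nat) : R := / (2 * PI * INR N).

Definition Xpow (N : nat) (s : R) (u : gvec) : gvec :=
  fun x => Cmult (Cexpi (s * x / hbar N)) (u x).

(* Y^s = exp(i s p / hbar) = exp(s d/dx): translation, (Y^s f)(x) = f(x+s);
   on weights of a discrete measure this is again w'(x) = w(x+s). *)
Definition Ypow (s : R) (u : gvec) : gvec := fun x => u (x + s).

(* S = exp(-(i log 2 / (2 hbar)) (x p + p x)) acts on functions by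
   (S f)(x) = 2^{-1/2} f(x/2).  On a discrete measure (delta(x/2 - a) =
   2 delta(x - 2a)) the weight transforms as w'(y) = 2^{1/2} w(y/2). *)
Definition Sop (u : gvec) : gvec := fun y => Cmult (RtoC (sqrt 2)) (u (y / 2)).

Definition mult_ind (A : R -> Prop) (u : gvec) : gvec :=
  fun x => if excluded_middle_informative (A x) then u x else RtoC 0.

Definition Eset (x : R) : Prop := exists k : Z, 2 * IZR k <= x < 2 * IZR k + 1.
Definition Oset (x : R) : Prop := exists k : Z, 2 * IZR k + 1 <= x < 2 * IZR k + 2.
Definition Ex (u : gvec) : gvec := mult_ind Eset u.
Definition Ox (u : gvec) : gvec := mult_ind Oset u.

Definition gadd (u v : gvec) : gvec := fun x => Cplus (u x) (v x).

(* Spectral projections of p onto Sigma + Z, Sigma a subset of [0,1).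
   Since Sigma + Z is 1-periodic, 1_{Sigma+Z}(p) is a function of
   V = e^{2 pi i p} = Y^{1/N} (translation by h = 1/N):
   on a generalized eigenvector u of V with eigenvalue e^{2 pi i theta},
   theta in [0,1) (i.e. spectrally p in theta + Z), the projection is u if
   theta in Sigma and 0 otherwise.  It is defined (by linearity) on finite
   sums of such eigenvectors. *)
Definition V_eigen (N : nat) (theta : R) (u : gvec) : Prop :=
  forall x, Ypow (/ INR N) u x = Cmult (Cexpi (2 * PI * theta)) (u x).

Definition sum_list (l : list (R * gvec)) (x : R) : C :=
  fold_right (fun p acc => Cplus (snd p x) acc) (RtoC 0) l.

Definition is_V_decomp (N : nat) (u : gvec) (l : list (R * gvec)) : Prop :=
  NoDup (map fst l) /\
  Forall (fun p => 0 <= fst p < 1 /\ V_eigen N (fst p) (snd p)) l /\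
  (forall x, u x = sum_list l x).

Definition filter_sum (Sigma : R -> Prop) (l : list (R * gvec)) (x : R) : C :=
  fold_right (fun p acc =>
    Cplus (if excluded_middle_informative (Sigma (fst p)) then snd p x else RtoC 0) acc)
    (RtoC 0) l.

(* spectral projection (zero outside its natural domain) *)
Definition spec_proj (N : nat) (Sigma : R -> Prop) (u : gvec) : gvec :=
  match excluded_middle_informative (exists l, is_V_decomp N u l) with
  | left H => filter_sum Sigma (proj1_sig (constructive_indefinite_description _ H))
  | right _ => fun _ => RtoC 0
  end.

Definition Bop (N : nat) : gvec -> gvec := spec_proj N (fun t => 0 <= t < 1/2).
Definition Top (N : nat) : gvec -> gvec := spec_proj N (fun t => 1/2 <= t < 1).

Definition Fop (N : nat) (u : gvec) : gvec :=
  let v := Sop u in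
  let w := gadd (Bop N v) (Ypow (-1) (Top N v)) in
  gadd (Ex w) (Xpow N (-1/2) (Ox w)).

Definition Phi (N : nat) (m : Z) : gvec :=
  fun x => if excluded_middle_informative (exists k : Z, x = IZR m / INR N + IZR k)
           then RtoC (/ sqrt (INR N)) else RtoC 0.

From Stdlib Require Import Reals ZArith List Lra Lia FunctionalExtensionality ClassicalEpsilon.
From Coquelicot Require Import Complex.
Open Scope R_scope.

(* Let v = S Phi_m; it lives on 2m/N + 2Z, so Y^2 v = v and X^{1/2} v = v.  B and T are
   functions of V = Y^{1/N}, well defined because V-eigenvectors with distinct eigenvalues
   are independent.  Hence they commute with Y^2, while X^{1/2}, which shifts the spectrum
   of V by e^{i pi}, exchanges them: b = Bv and t = Tv satisfy X^{1/2} t = b, X^{1/2} b = t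
   and Y^2 t = t.  Then w = b + Y^{-1} t satisfies X w = w and X^{1/2} Y w = w, and for N
   even these two relations make (E_x + X^{-1/2} O_x) w invariant under X and Y. *)

Lemma Cexpi_add a b : Cexpi (a + b) = (Cexpi a * Cexpi b)%C.
Proof. unfold Cexpi, Cmult; simpl. rewrite cos_plus, sin_plus. f_equal; ring. Qed.

Lemma Cexpi_0 : Cexpi 0 = 1%C.
Proof. unfold Cexpi; rewrite cos_0, sin_0; reflexivity. Qed.

Lemma Cexpi_PI : Cexpi PI = (- 1)%C.
Proof. unfold Cexpi; rewrite cos_PI, sin_PI. unfold Copp, RtoC; simpl; f_equal; ring. Qed.

Lemma Cexpi_2PI_IZR (k : Z) : Cexpi (2 * PI * IZR k) = 1%C.
Proof.
  assert (Hnat : forall n : nat, Cexpi (2 * PI * INR n) = 1%C).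
  { intro n. unfold Cexpi. replace (2 * PI * INR n) with (0 + 2 * INR n * PI) by ring.
    rewrite cos_period, sin_period, cos_0, sin_0; reflexivity. }
  destruct (Z_le_gt_dec 0 k) as [Hk | Hk].
  - rewrite <- (Z2Nat.id k Hk), <- INR_IZR_INZ. apply Hnat.
  - replace k with (- Z.of_nat (Z.to_nat (- k)))%Z by lia.
    rewrite opp_IZR, <- INR_IZR_INZ.
    pose proof (Hnat (Z.to_nat (- k))) as E. unfold Cexpi in *. injection E as Ec Es.
    rewrite Ropp_mult_distr_r_reverse, cos_neg, sin_neg, Ec, Es.
    unfold RtoC; f_equal; ring.
Qed.

Lemma Cexpi_add_2PI_IZR a (k : Z) : Cexpi (a + 2 * PI * IZR k) = Cexpi a.
Proof. rewrite Cexpi_add, Cexpi_2PI_IZR. ring. Qed.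

Lemma Xpow_eq N s u x : Xpow N s u x = (Cexpi (2 * PI * INR N * s * x) * u x)%C.
Proof. unfold Xpow, hbar. f_equal. f_equal. unfold Rdiv. rewrite Rinv_inv. ring. Qed.

Lemma Xpow_0 N u : Xpow N 0 u = u.
Proof.
  extensionality x. rewrite Xpow_eq, Rmult_0_r, Rmult_0_l, Cexpi_0. ring.
Qed.

Lemma Xpow_Xpow N s s' u : Xpow N s (Xpow N s' u) = Xpow N (s + s') u.
Proof.
  extensionality x. rewrite !Xpow_eq.
  replace (2 * PI * INR N * (s + s') * x) with (2 * PI * INR N * s * x + 2 * PI * INR N * s' * x)
    by ring.
  rewrite Cexpi_add. ring.
Qed.

Lemma Ypow_0 u : Ypow 0 u = u.
Proof. extensionality x. unfold Ypow. now rewrite Rplus_0_r. Qed.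

Lemma Ypow_Ypow a a' u : Ypow a (Ypow a' u) = Ypow (a + a') u.
Proof. extensionality x. unfold Ypow. f_equal. ring. Qed.

Lemma Xpow_gadd N s u v : Xpow N s (gadd u v) = gadd (Xpow N s u) (Xpow N s v).
Proof. extensionality x. unfold gadd. rewrite !Xpow_eq. ring. Qed.

Lemma Ypow_gadd a u v : Ypow a (gadd u v) = gadd (Ypow a u) (Ypow a v).
Proof. reflexivity. Qed.

Lemma gaddC u v : gadd u v = gadd v u.
Proof. extensionality x. unfold gadd. ring. Qed.

Lemma Xpow_mult_ind N s A u : Xpow N s (mult_ind A u) = mult_ind A (Xpow N s u).
Proof.
  extensionality x. unfold mult_ind. rewrite !Xpow_eq.
  destruct (excluded_middle_informative (A x)); [reflexivity | ring].
Qed.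

Lemma Ypow_mult_ind a A B u : (forall x, A x <-> B (x + a)) ->
  Ypow a (mult_ind B u) = mult_ind A (Ypow a u).
Proof.
  intro HAB. extensionality x. unfold Ypow, mult_ind.
  destruct (excluded_middle_informative (B (x + a)));
    destruct (excluded_middle_informative (A x)); firstorder.
Qed.

(* Weyl relation Y^a X^s = e^{2 pi i N s a} X^s Y^a, in the case where the phase is trivial. *)
Lemma Ypow_Xpow N s a u : (exists k : Z, INR N * s * a = IZR k) ->
  Ypow a (Xpow N s u) = Xpow N s (Ypow a u).
Proof.
  intros [k Hk]. extensionality x. unfold Ypow. rewrite !Xpow_eq.
  replace (2 * PI * INR N * s * (x + a)) with (2 * PI * INR N * s * x + 2 * PI * IZR k)
    by (rewrite <- Hk; ring).
  now rewrite Cexpi_add_2PI_IZR.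
Qed.

Lemma Oset_iff_Eset_succ x : Oset x <-> Eset (x + 1).
Proof.
  split; intros [k Hk].
  - exists (k + 1)%Z. rewrite plus_IZR. lra.
  - exists (k - 1)%Z. rewrite minus_IZR. lra.
Qed.

Lemma Eset_iff_Oset_succ x : Eset x <-> Oset (x + 1).
Proof. split; intros [k Hk]; exists k; lra. Qed.

Definition EOop (N : nat) (w : gvec) : gvec := gadd (Ex w) (Xpow N (-1/2) (Ox w)).

Lemma Xpow_EOop N s w : Xpow N s (EOop N w) = EOop N (Xpow N s w).
Proof.
  unfold EOop, Ex, Ox. rewrite Xpow_gadd, Xpow_Xpow, <- !Xpow_mult_ind, Xpow_Xpow.
  now rewrite Rplus_comm.
Qed.

Lemma Ypow_EOop N w : Nat.Even N ->
  Ypow 1 (EOop N w) = gadd (Ox (Ypow 1 w)) (Xpow N (-1/2) (Ex (Ypow 1 w))).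
Proof.
  intros [n Hn]. unfold EOop, Ex, Ox.
  rewrite Ypow_gadd, Ypow_Xpow.
  - rewrite (Ypow_mult_ind 1 Oset Eset), (Ypow_mult_ind 1 Eset Oset); [reflexivity | |].
    + exact Eset_iff_Oset_succ.
    + exact Oset_iff_Eset_succ.
  - exists (- Z.of_nat n)%Z. rewrite opp_IZR, <- INR_IZR_INZ, Hn, mult_INR. simpl. lra.
Qed.

(* Y exchanges E_x and O_x, and Y w = X^{-1/2} w moves the factor X^{-1/2} back onto O_x. *)
Lemma EOop_invariant N w : Nat.Even N ->
  Xpow N 1 w = w -> Xpow N (1/2) (Ypow 1 w) = w ->
  Xpow N 1 (EOop N w) = EOop N w /\ Ypow 1 (EOop N w) = EOop N w.
Proof.
  intros Heven HX HXY. split.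
  - now rewrite Xpow_EOop, HX.
  - assert (HY : Ypow 1 w = Xpow N (-1/2) w).
    { rewrite <- HXY at 2. rewrite Xpow_Xpow. replace (-1/2 + 1/2) with 0 by lra.
      now rewrite Xpow_0. }
    assert (HXinv : Xpow N (-1) w = w).
    { rewrite <- HX at 1. rewrite Xpow_Xpow. replace (-1 + 1) with 0 by lra.
      now rewrite Xpow_0. }
    rewrite Ypow_EOop by exact Heven. rewrite HY. unfold EOop, Ex, Ox.
    rewrite <- !Xpow_mult_ind, Xpow_Xpow. replace (-1/2 + -1/2) with (-1) by lra.
    rewrite (Xpow_mult_ind N (-1)), HXinv. apply gaddC.
Qed.

Definition eigval (t : R) : C := Cexpi (2 * PI * t).

Lemma eigval_inj a b : 0 <= a < 1 -> 0 <= b < 1 -> eigval a = eigval b -> a = b.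
Proof.
  intros Ha Hb E. unfold eigval, Cexpi in E. injection E as Ec Es.
  assert (Hsin : sin (2 * PI * a - 2 * PI * b) = 0) by (rewrite sin_minus, Ec, Es; ring).
  assert (Hcos : cos (2 * PI * a - 2 * PI * b) = 1).
  { rewrite cos_minus, Ec, Es. pose proof (sin2_cos2 (2 * PI * b)) as H1.
    unfold Rsqr in H1. lra. }
  destruct (sin_eq_0_0 _ Hsin) as [k Hk]. rewrite Hk in Hcos.
  pose proof PI_RGT_0.
  assert (Hk_lt : IZR k < 2) by nra.
  assert (Hk_gt : -2 < IZR k) by nra.
  apply lt_IZR in Hk_lt. apply lt_IZR in Hk_gt.
  assert (k = 0 \/ k = 1 \/ k = -1)%Z as [-> | [-> | ->]] by lia.
  - nra.
  - rewrite Rmult_1_l, cos_PI in Hcos. lra.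
  - replace (IZR (-1) * PI) with (- PI) in Hcos by (simpl; ring).
    rewrite cos_neg, cos_PI in Hcos. lra.
Qed.


Definition V_eigenlist (N : nat) (l : list (R * gvec)) : Prop :=
  Forall (fun p : R * gvec => 0 <= fst p < 1 /\ V_eigen N (fst p) (snd p)) l.

(* [spec_sum g l] is g(p) applied to [sum_list l], each entry (theta, u) being a
   V-eigenvector with eigenvalue e^{2 pi i theta}. *)
Definition spec_sum (g : R -> C) (l : list (R * gvec)) : gvec :=
  fun x => fold_right (fun (p : R * gvec) (acc : C) => (g (fst p) * snd p x + acc)%C) 0%C l.

Definition scale_list (h : R -> C) (l : list (R * gvec)) : list (R * gvec) :=
  map (fun p : R * gvec => (fst p, fun z => (h (fst p) * snd p z)%C)) l.

Lemma spec_sum_app g l1 l2 x :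
  spec_sum g (l1 ++ l2) x = (spec_sum g l1 x + spec_sum g l2 x)%C.
Proof. unfold spec_sum. induction l1 as [|p l1 IH]; cbn in *; [ring | rewrite IH; ring]. Qed.

Lemma spec_sum_scale c g l x :
  spec_sum (fun t => c * g t)%C l x = (c * spec_sum g l x)%C.
Proof. unfold spec_sum. induction l as [|p l IH]; cbn in *; [ring | rewrite IH; ring]. Qed.

Lemma spec_sum_add g1 g2 l x :
  spec_sum (fun t => g1 t + g2 t)%C l x = (spec_sum g1 l x + spec_sum g2 l x)%C.
Proof. unfold spec_sum. induction l as [|p l IH]; cbn in *; [ring | rewrite IH; ring]. Qed.

Lemma spec_sum_ext_at (g1 g2 : R -> C) (l : list (R * gvec)) x :
  Forall (fun p : R * gvec => g1 (fst p) = g2 (fst p) \/ snd p x = 0%C) l ->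
  spec_sum g1 l x = spec_sum g2 l x.
Proof.
  unfold spec_sum. induction 1 as [|[t u] l Hp _ IH]; cbn in *; [reflexivity|].
  rewrite IH. destruct Hp as [-> | ->]; ring.
Qed.

Lemma spec_sum_scale_list h g l x :
  spec_sum g (scale_list h l) x = spec_sum (fun t => h t * g t)%C l x.
Proof.
  unfold spec_sum, scale_list.
  induction l as [|p l IH]; cbn in *; [reflexivity | rewrite IH; ring].
Qed.

Lemma spec_sum_sub_eigval N v g l x :
  Forall (fun p : R * gvec => V_eigen N (fst p) (snd p)) l ->
  spec_sum g (scale_list (fun t => eigval t - eigval v)%C l) x
  = (spec_sum g l (x + / INR N)%R - eigval v * spec_sum g l x)%C.
Proof.
  unfold spec_sum, scale_list. induction 1 as [|[t u] l Hp _ IH]; cbn in *; [ring|].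
  rewrite IH. specialize (Hp x). unfold Ypow in Hp. rewrite Hp. unfold eigval. ring.
Qed.

Lemma V_eigen_scale N t c u : V_eigen N t u -> V_eigen N t (fun z => c * u z)%C.
Proof. intros Hu x. specialize (Hu x). unfold Ypow in *. rewrite Hu. ring. Qed.

Definition V_supported (N : nat) (vals : list R) (l : list (R * gvec)) : Prop :=
  Forall (fun p : R * gvec => V_eigen N (fst p) (snd p) /\
                   (In (fst p) vals \/ forall x, snd p x = 0%C)) l.

Lemma V_supported_kill N v vals l : V_supported N (v :: vals) l ->
  V_supported N vals (scale_list (fun t => eigval t - eigval v)%C l).
Proof.
  intro Hl. unfold V_supported, scale_list. rewrite Forall_map.
  eapply Forall_impl; [|exact Hl]. intros [t u] [Hu Hin]; cbn in *.
  split; [now apply V_eigen_scale|].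
  destruct Hin as [[<- | Hin] | Hz]; [right | left | right]; intros; rewrite ?Hz; try ring.
  exact Hin.
Qed.

(* Independence of V-eigenvectors with distinct eigenvalues: applying V - e^{2 pi i v}
   kills the eigenvalue v, and one inducts on the set of eigenvalues.  The killed entries
   stay in the list as zero vectors, hence the second disjunct of [V_supported]. *)
Lemma spec_sum_eq0_of_sum_eq0 N vals :
  Forall (fun t => 0 <= t < 1) vals ->
  forall l, V_supported N vals l ->
  (forall x, spec_sum (fun _ => 1%C) l x = 0%C) ->
  forall g x, spec_sum g l x = 0%C.
Proof.
  induction vals as [|v vals IH]; intros Hvals l Hl Hsum g x.
  - transitivity (spec_sum (fun _ => 0 * 1)%C l x).
    + apply spec_sum_ext_at. eapply Forall_impl; [|exact Hl].
      intros p [_ [[] | Hz]]. now right.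
    + rewrite spec_sum_scale. ring.
  - inversion_clear Hvals as [|? ? Hv Hvals'].
    set (h t := if Req_EM_T t v then RtoC 0 else ((g t - g v) / (eigval t - eigval v))%C).
    assert (Hkill : spec_sum h (scale_list (fun t => eigval t - eigval v)%C l) x = 0%C).
    { apply IH; [exact Hvals' | now apply V_supported_kill |].
      intro z. rewrite (spec_sum_sub_eigval N), !Hsum; [ring|].
      eapply Forall_impl; [|exact Hl]. tauto. }
    rewrite spec_sum_scale_list in Hkill.
    transitivity (spec_sum (fun t => (eigval t - eigval v) * h t + g v * 1)%C l x).
    + apply spec_sum_ext_at. eapply Forall_impl; [|exact Hl].
      intros [t u] [_ [Hin | Hz]]; cbn in *; [left | now right].
      unfold h. destruct (Req_EM_T t v) as [-> | Hne]; [ring|].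
      assert (Hdiff : (eigval t - eigval v)%C <> 0%C).
      { intro E. apply Hne, eigval_inj.
        - destruct Hin as [<- | Hin]; [exact Hv|]. rewrite Forall_forall in Hvals'. auto.
        - exact Hv.
        - replace (eigval t) with (eigval t - eigval v + eigval v)%C by ring.
          rewrite E. ring. }
      field. exact Hdiff.
    + rewrite spec_sum_add, spec_sum_scale, Hkill, Hsum. ring.
Qed.

Lemma spec_sum_unique N l1 l2 : V_eigenlist N l1 -> V_eigenlist N l2 ->
  (forall x, spec_sum (fun _ => 1%C) l1 x = spec_sum (fun _ => 1%C) l2 x) ->
  forall g x, spec_sum g l1 x = spec_sum g l2 x.
Proof.
  intros H1 H2 Hsum g x.
  set (L := l1 ++ scale_list (fun _ => (-1)%C) l2).
  assert (HL : V_eigenlist N L).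
  { apply Forall_app. split; [exact H1|]. unfold scale_list. rewrite Forall_map.
    eapply Forall_impl; [|exact H2].
    intros p [Hp Hu]. split; [exact Hp | now apply V_eigen_scale]. }
  assert (HLdiff : forall g y, spec_sum g L y = (spec_sum g l1 y - spec_sum g l2 y)%C).
  { intros g' y. unfold L. rewrite spec_sum_app, spec_sum_scale_list, spec_sum_scale. ring. }
  assert (HL0 : spec_sum g L x = 0%C).
  { apply (spec_sum_eq0_of_sum_eq0 N (map fst L)).
    - rewrite Forall_map. eapply Forall_impl; [|exact HL]. intros p Hp; apply Hp.
    - unfold V_supported. apply Forall_forall. intros p Hp.
      unfold V_eigenlist in HL. rewrite Forall_forall in HL.
      split; [apply HL, Hp | left; now apply in_map].
    - intro y. rewrite HLdiff, Hsum. ring. }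
  rewrite HLdiff in HL0.
  replace (spec_sum g l1 x) with (spec_sum g l2 x + (spec_sum g l1 x - spec_sum g l2 x))%C by ring.
  rewrite HL0. ring.
Qed.

Definition mul_shift (K : R -> C) (a : R) (u : gvec) : gvec := fun z => (K z * u (z + a)%R)%C.

Definition relabel (s : R -> R) (A : gvec -> gvec) (l : list (R * gvec)) : list (R * gvec) :=
  map (fun p : R * gvec => (s (fst p), A (snd p))) l.

Lemma spec_sum_relabel_mul_shift s K a g l x :
  spec_sum g (relabel s (mul_shift K a) l) x = mul_shift K a (spec_sum (fun t => g (s t)) l) x.
Proof.
  unfold spec_sum, relabel, mul_shift.
  induction l as [|p l IH]; cbn in *; [ring | rewrite IH; ring].
Qed.

Definition ind (S : R -> Prop) (t : R) : C :=
  if excluded_middle_informative (S t) then 1%C else 0%C.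

Lemma sum_list_spec_sum l x : sum_list l x = spec_sum (fun _ => 1%C) l x.
Proof.
  unfold sum_list, spec_sum.
  induction l as [|[t u] l IH]; cbn in *; [reflexivity | rewrite IH; ring].
Qed.

Lemma filter_sum_spec_sum S l x : filter_sum S l x = spec_sum (ind S) l x.
Proof.
  unfold filter_sum, spec_sum, ind. induction l as [|[t u] l IH]; cbn in *; [reflexivity|].
  rewrite IH. destruct (excluded_middle_informative (S t)); ring.
Qed.

Section Covariance.

Variables (N : nat) (s : R -> R) (K : R -> C) (a : R).
Hypothesis s_range : forall t, 0 <= t < 1 -> 0 <= s t < 1.
Hypothesis K_intertwines : forall t x, 0 <= t < 1 ->
  (K (x + / INR N)%R * eigval t = eigval (s t) * K x)%C.

Lemma V_eigenlist_relabel_mul_shift l :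
  V_eigenlist N l -> V_eigenlist N (relabel s (mul_shift K a) l).
Proof.
  intro Hl. unfold V_eigenlist, relabel. rewrite Forall_map.
  eapply Forall_impl; [|exact Hl]. intros [t u] [Ht Hu]; cbn in *.
  split; [now apply s_range|]. intro x. unfold Ypow, mul_shift.
  specialize (Hu (x + a)). unfold Ypow in Hu.
  replace (x + / INR N + a) with (x + a + / INR N) by ring. rewrite Hu.
  transitivity ((K (x + / INR N)%R * eigval t) * u (x + a)%R)%C; [unfold eigval; ring|].
  rewrite K_intertwines by exact Ht. unfold eigval. ring.
Qed.

Lemma mul_shift_spec_sum l g :
  V_eigenlist N l ->
  (forall x, mul_shift K a (spec_sum (fun _ => 1%C) l) x = spec_sum (fun _ => 1%C) l x) ->
  forall x, mul_shift K a (spec_sum (fun t => g (s t)) l) x = spec_sum g l x.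
Proof.
  (* The relabelled list decomposes the same vector, so uniqueness applies. *)
  intros Hl Hfix x. rewrite <- spec_sum_relabel_mul_shift.
  apply (spec_sum_unique N); [now apply V_eigenlist_relabel_mul_shift | exact Hl |].
  intro y. rewrite spec_sum_relabel_mul_shift. apply Hfix.
Qed.

Lemma mul_shift_spec_proj (S S' : R -> Prop) v :
  (forall t, 0 <= t < 1 -> (S' (s t) <-> S t)) ->
  (forall x, mul_shift K a v x = v x) ->
  forall x, mul_shift K a (spec_proj N S v) x = spec_proj N S' v x.
Proof.
  intros HS Hfix x. unfold spec_proj.
  destruct (excluded_middle_informative _) as [Hex|]; [|unfold mul_shift; ring].
  destruct (constructive_indefinite_description _ Hex) as [l Hdecomp]; cbn [proj1_sig].
  destruct Hdecomp as (_ & Hl & Hv).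
  assert (Hind : forall y, filter_sum S l y = spec_sum (fun t => ind S' (s t)) l y).
  { intro y. rewrite filter_sum_spec_sum. apply spec_sum_ext_at.
    eapply Forall_impl; [|exact Hl]. intros [t u] [Ht _]; cbn. left.
    unfold ind. specialize (HS t Ht).
    destruct (excluded_middle_informative (S t)), (excluded_middle_informative (S' (s t)));
      tauto. }
  transitivity (mul_shift K a (spec_sum (fun t => ind S' (s t)) l) x).
  { unfold mul_shift. now rewrite Hind. }
  rewrite filter_sum_spec_sum. apply mul_shift_spec_sum; [exact Hl|].
  replace (spec_sum (fun _ => 1%C) l) with v; [exact Hfix|].
  extensionality y. now rewrite Hv, sum_list_spec_sum.
Qed.

End Covariance.

Lemma Ypow_spec_proj N S a v :
  Ypow a v = v -> Ypow a (spec_proj N S v) = spec_proj N S v.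
Proof.
  intro Hv. extensionality x.
  transitivity (mul_shift (fun _ => 1%C) a (spec_proj N S v) x).
  { unfold mul_shift, Ypow. ring. }
  apply (mul_shift_spec_proj N (fun t => t)); [tauto | intros; ring | tauto |].
  intro y. unfold mul_shift. change (v (y + a)) with (Ypow a v y). rewrite Hv. ring.
Qed.

Definition sh (t : R) : R := if Rlt_dec t (1/2) then t + 1/2 else t - 1/2.

Lemma sh_range t : 0 <= t < 1 -> 0 <= sh t < 1.
Proof. unfold sh; destruct (Rlt_dec t (1/2)); lra. Qed.

Lemma eigval_sh t : eigval (sh t) = (- eigval t)%C.
Proof.
  unfold eigval, sh. destruct (Rlt_dec t (1/2)).
  - replace (2 * PI * (t + 1/2)) with (2 * PI * t + PI) by field.
    rewrite Cexpi_add, Cexpi_PI. ring.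
  - replace (2 * PI * (t - 1/2)) with (2 * PI * t + PI + 2 * PI * IZR (-1)) by (simpl; field).
    rewrite Cexpi_add_2PI_IZR, Cexpi_add, Cexpi_PI. ring.
Qed.

(* X^{1/2} multiplies by e^{i pi N x}, which shifts the eigenvalues of V = Y^{1/N} by e^{i pi}. *)
Lemma Xpow_half_spec_proj N (S S' : R -> Prop) v : (0 < N)%nat ->
  (forall t, 0 <= t < 1 -> (S' (sh t) <-> S t)) ->
  Xpow N (1/2) v = v -> Xpow N (1/2) (spec_proj N S v) = spec_proj N S' v.
Proof.
  intros HN HS Hv. assert (HN' : INR N <> 0) by (apply not_0_INR; lia).
  set (K z := Cexpi (2 * PI * INR N * (1/2) * z)).
  assert (HK : forall u x, Xpow N (1/2) u x = mul_shift K 0 u x).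
  { intros u x. unfold mul_shift, K. now rewrite Xpow_eq, Rplus_0_r. }
  extensionality x. rewrite HK.
  apply (mul_shift_spec_proj N sh); [exact sh_range | | exact HS |].
  - intros t y _. unfold K. rewrite eigval_sh.
    replace (2 * PI * INR N * (1/2) * (y + / INR N)) with (2 * PI * INR N * (1/2) * y + PI)
      by (field; exact HN').
    rewrite Cexpi_add, Cexpi_PI. ring.
  - intro y. now rewrite <- HK, Hv.
Qed.

Lemma Xpow_half_Top N v : (0 < N)%nat ->
  Xpow N (1/2) v = v -> Xpow N (1/2) (Top N v) = Bop N v.
Proof.
  intros HN Hv. apply Xpow_half_spec_proj; [exact HN | | exact Hv].
  intros t Ht. unfold sh. destruct (Rlt_dec t (1/2)); lra.
Qed.

Lemma Xpow_half_Bop N v : (0 < N)%nat ->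
  Xpow N (1/2) v = v -> Xpow N (1/2) (Bop N v) = Top N v.
Proof.
  intros HN Hv. apply Xpow_half_spec_proj; [exact HN | | exact Hv].
  intros t Ht. unfold sh. destruct (Rlt_dec t (1/2)); lra.
Qed.

Lemma EOop_BT_invariant N b t : Nat.Even N ->
  Xpow N (1/2) t = b -> Xpow N (1/2) b = t -> Ypow 2 t = t ->
  let F := EOop N (gadd b (Ypow (-1) t)) in Xpow N 1 F = F /\ Ypow 1 F = F.
Proof.
  intros [n Hn] Htb Hbt Ht2 F. apply EOop_invariant; [now exists n | |].
  - assert (HX1 : forall u, Xpow N 1 u = Xpow N (1/2) (Xpow N (1/2) u)).
    { intro u. rewrite Xpow_Xpow. f_equal. lra. }
    rewrite Xpow_gadd, <- Ypow_Xpow, !HX1, Hbt, Htb, Hbt; [reflexivity|].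
    exists (- Z.of_nat N)%Z. rewrite opp_IZR, <- INR_IZR_INZ. ring.
  - rewrite Ypow_gadd, Ypow_Ypow, Xpow_gadd, <- Ypow_Xpow, Hbt.
    + replace (1 + -1) with 0 by ring. rewrite Ypow_0, Htb, gaddC.
      rewrite <- Ht2 at 2. rewrite Ypow_Ypow. f_equal. f_equal. ring.
    + exists (Z.of_nat n). rewrite <- INR_IZR_INZ, Hn, mult_INR. simpl. field.
Qed.

Lemma Xpow_Sop N s u : Xpow N s (Sop u) = Sop (Xpow N (2 * s) u).
Proof.
  extensionality y. unfold Sop. rewrite !Xpow_eq.
  replace (2 * PI * INR N * (2 * s) * (y / 2)) with (2 * PI * INR N * s * y) by field. ring.
Qed.

Lemma Ypow_Sop a u : Ypow a (Sop u) = Sop (Ypow (a / 2) u).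
Proof. extensionality y. unfold Sop, Ypow. do 2 f_equal. field. Qed.

Lemma Xpow_Phi N m : (0 < N)%nat -> Xpow N 1 (Phi N m) = Phi N m.
Proof.
  intro HN. assert (HN' : INR N <> 0) by (apply not_0_INR; lia).
  extensionality x. rewrite Xpow_eq. unfold Phi.
  destruct (excluded_middle_informative _) as [[k Hk] | _]; [|ring].
  replace (2 * PI * INR N * 1 * x) with (0 + 2 * PI * IZR (m + k * Z.of_nat N)).
  - rewrite Cexpi_add_2PI_IZR, Cexpi_0. ring.
  - rewrite Hk, plus_IZR, mult_IZR, <- INR_IZR_INZ. field. exact HN'.
Qed.

Lemma Ypow_Phi N m : Ypow 1 (Phi N m) = Phi N m.
Proof.
  extensionality x. unfold Ypow, Phi.
  destruct (excluded_middle_informative (exists k : Z, x + 1 = IZR m / INR N + IZR k))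
    as [[k Hk] | Hno1];
  destruct (excluded_middle_informative (exists k : Z, x = IZR m / INR N + IZR k))
    as [[j Hj] | Hno2]; try reflexivity.
  - exfalso. apply Hno2. exists (k - 1)%Z. rewrite minus_IZR. lra.
  - exfalso. apply Hno1. exists (j + 1)%Z. rewrite plus_IZR. lra.
Qed.

Theorem mainTheorem3 (N : nat) (hN : (0 < N)%nat) (hEven : Nat.Even N) :
  forall m : Z,
    Xpow N 1 (Fop N (Phi N m)) = Fop N (Phi N m) /\
    Ypow 1 (Fop N (Phi N m)) = Fop N (Phi N m).
Proof.
  intro m. set (v := Sop (Phi N m)).
  assert (HvX : Xpow N (1/2) v = v).
  { unfold v. rewrite Xpow_Sop. replace (2 * (1/2)) with 1 by field. now rewrite Xpow_Phi. }
  assert (HvY : Ypow 2 v = v).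
  { unfold v. rewrite Ypow_Sop. replace (2/2) with 1 by field. now rewrite Ypow_Phi. }
  apply EOop_BT_invariant.
  - exact hEven.
  - now apply Xpow_half_Top.
  - now apply Xpow_half_Bop.
  - now apply Ypow_spec_proj.
Qed.
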